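(* Let $A:\mathbb{R}^d\rightrightarrows\mathbb{R}^d$ be maximal monotone with $A^{-1}(0)\neq\emptyset$, let $p\geq1$ be an integer, $\sigma\in(0,1)$, $\theta>0$, $x_0\in\mathbb{R}^d$, and suppose $\lambda_k>0$, $y_k,v_k,x_k\in\mathbb{R}^d$, $\epsilon_k\geq0$ satisfy for every $k\geq0$: $v_{k+1}\in A^{\epsilon_{k+1}}(y_{k+1})$, $\|\lambda_{k+1}v_{k+1}+y_{k+1}-x_k\|^2+2\lambda_{k+1}\epsilon_{k+1}\leq\sigma^2\|y_{k+1}-x_k\|^2$, $\lambda_{k+1}\|y_{k+1}-x_k\|^{p-1}\geq\theta$, and $x_{k+1}=x_k-\lambda_{k+1}v_{k+1}$. For $z\in\mathbb{R}^d$ let $\mathcal{E}_k=\frac12\|x_k-z\|^2$. Then for every integer $k\geq1$, \[ \sum_{i=1}^k\lambda_i\langle v,y_i-z\rangle+\frac{1-\sigma^2}{2}\sum_{i=1}^k\|x_{i-1}-y_i\|^2\leq\mathcal{E}_0-\mathcal{E}_k\quad\text{for all }v\in Az. \] Consequently, with $\tilde y_k=\frac1{\sum_{i=1}^k\lambda_i}\sum_{i=1}^k\lambda_iy_i$, $\sup_{v\in Az}\langle v,\tilde y_k-z\rangle\leq\frac{\mathcal{E}_0}{\sum_{i=1}^k\lambda_i}$, and, since $\sigma<1$, $\sum_{i=1}^k\|x_{i-1}-y_i\|^2\leq\frac{\|x_0-z^\star\|^2}{1-\sigma^2}$ for any $z^\star\in A^{-1}(0)$.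
   Context: The $\epsilon$-enlargement is $A^{\epsilon}(x)=\{v\in\mathbb{R}^d:\langle x-\tilde x,v-\tilde v\rangle\geq-\epsilon\ \forall\tilde x\in\mathbb{R}^d,\ \forall\tilde v\in A\tilde x\}$. *)

From mathcomp Require Import all_boot all_order all_algebra.
From mathcomp Require Import reals.
Set Implicit Arguments. Unset Strict Implicit. Unset Printing Implicit Defensive.
Import Order.TTheory GRing.Theory Num.Theory.
Local Open Scope ring_scope.

Definition dotv (R : realType) (d : nat) (u v : 'rV[R]_d) : R :=
  \sum_(i < d) u ord0 i * v ord0 i.

Definition sqnorm (R : realType) (d : nat) (u : 'rV[R]_d) : R := dotv u u.

Definition normv (R : realType) (d : nat) (u : 'rV[R]_d) : R := Num.sqrt (sqnorm u).

(* A set-valued operator A : R^d ⇉ R^d is a relation: A x v  <->  v ∈ A x. *)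
Definition setop (R : realType) (d : nat) := 'rV[R]_d -> 'rV[R]_d -> Prop.

Definition monotone_op (R : realType) (d : nat) (A : setop R d) : Prop :=
  forall x y u v, A x u -> A y v -> 0 <= dotv (x - y) (u - v).

Definition maximal_monotone (R : realType) (d : nat) (A : setop R d) : Prop :=
  monotone_op A /\
  forall B : setop R d, monotone_op B -> (forall x v, A x v -> B x v) ->
    forall x v, B x v -> A x v.

Definition enlargement (R : realType) (d : nat) (A : setop R d) (eps : R)
    (x v : 'rV[R]_d) : Prop :=
  forall xt vt, A xt vt -> dotv (x - xt) (v - vt) >= - eps.

From mathcomp Require Import all_boot all_order all_algebra.
From mathcomp Require Import reals.
From mathcomp Require Import ring lra.
Set Implicit Arguments. Unset Strict Implicit. Unset Printing Implicit Defensive.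
Import Order.TTheory GRing.Theory Num.Theory.
Local Open Scope ring_scope.

(* Expanding squares, one step x' = x - l u of the method gives
   ||x - z||^2 - ||x' - z||^2 = 2 l <u, y - z> + ||x - y||^2 - ||l u + y - x||^2.
   For w in A z, u in A^eps(y) yields <u, y - z> >= <w, y - z> - eps, and the
   relative error criterion absorbs both -2 l eps and ||l u + y - x||^2 into
   sigma^2 ||x - y||^2.  Summing these one-step descents telescopes to the
   first estimate; the other two follow by dropping nonnegative terms, using
   bilinearity to pull the weighted mean of the y_i out of <w, . - z>. *)

Section InnerProduct.
Variables (R : realType) (d : nat).
Implicit Types (a b c u w : 'rV[R]_d).

Lemma sqnorm_ge0 u : 0 <= sqnorm u.
Proof. by apply: sumr_ge0 => i _; rewrite -expr2 sqr_ge0. Qed.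

Lemma sqnormC a b : sqnorm (a - b) = sqnorm (b - a).
Proof. by apply: eq_bigr => j _; rewrite !mxE; ring. Qed.

Lemma dotvC a b : dotv a b = dotv b a.
Proof. by apply: eq_bigr => j _; rewrite mulrC. Qed.

Lemma dotv0l u : dotv 0 u = 0.
Proof. by apply: big1 => j _; rewrite mxE mul0r. Qed.

Lemma dotvBr a b c : dotv a (b - c) = dotv a b - dotv a c.
Proof. by rewrite /dotv -sumrB; apply: eq_bigr => j _; rewrite !mxE; ring. Qed.

Lemma dotvZr w u (k : R) : dotv w (k *: u) = k * dotv w u.
Proof. by rewrite /dotv mulr_sumr; apply: eq_bigr => j _; rewrite mxE; ring. Qed.

Lemma dotv_sumr w m n (F : nat -> 'rV[R]_d) :
  dotv w (\sum_(m <= i < n) F i) = \sum_(m <= i < n) dotv w (F i).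
Proof.
rewrite /dotv exchange_big /=; apply: eq_bigr => j _.
by rewrite summxE mulr_sumr.
Qed.

Lemma dotv_weighted_mean w z m n (lam : nat -> R) (y : nat -> 'rV[R]_d) :
  \sum_(m <= i < n) lam i != 0 ->
  dotv w ((\sum_(m <= i < n) lam i)^-1 *: \sum_(m <= i < n) lam i *: y i - z)
  = (\sum_(m <= i < n) lam i)^-1 * \sum_(m <= i < n) lam i * dotv w (y i - z).
Proof.
move=> S_neq0; set S := \sum_(m <= i < n) lam i.
have z_mean : z = S^-1 *: \sum_(m <= i < n) lam i *: z.
  by rewrite -scaler_suml -/S scalerA mulVf ?scale1r.
rewrite {1}z_mean -scalerBr -sumrB dotvZr dotv_sumr.
by congr (_ * _); apply: eq_bigr => i _; rewrite -scalerBr dotvZr.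
Qed.

Lemma sqnorm_step_identity a y z u (l : R) :
  sqnorm (a - z) - sqnorm (a - l *: u - z) =
  2 * l * dotv (y - z) u + sqnorm (a - y) - sqnorm (l *: u + y - a).
Proof.
rewrite /sqnorm /dotv !mulr_sumr -!big_split /= -!sumrB.
by apply: eq_bigr => j _; rewrite !mxE; ring.
Qed.

End InnerProduct.

Lemma telescoping_le (R : realDomainType) (f e : nat -> R) n :
  (forall k, f k.+1 <= e k - e k.+1) ->
  \sum_(1 <= i < n.+1) f i <= e 0%N - e n.
Proof.
move=> step; elim: n => [|n IH]; first by rewrite big_geq // subrr.
by rewrite big_nat_recr //=; have := step n; lra.
Qed.

Lemma proximal_step_descent (R : realType) d (A : setop R d) (sigma l eps : R)
    (a y u z w : 'rV[R]_d) :
  0 < l -> enlargement A eps y u -> A z w ->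
  sqnorm (l *: u + y - a) + 2 * l * eps <= sigma ^+ 2 * sqnorm (y - a) ->
  l * dotv w (y - z) + (1 - sigma ^+ 2) / 2 * sqnorm (a - y)
  <= sqnorm (a - z) / 2 - sqnorm (a - l *: u - z) / 2.
Proof.
move=> l_gt0 Ayu Azw err.
have mono : l * (- eps) <= l * dotv (y - z) (u - w) by rewrite ler_pM2l // Ayu.
have := sqnorm_step_identity a y z u l.
rewrite dotvBr [dotv (y - z) w]dotvC sqnormC in mono err *.
lra.
Qed.

Theorem lemma4p1 (R : realType) (d : nat) (A : setop R d)
  (p : nat) (sigma theta : R) (x0 : 'rV[R]_d)
  (lam : nat -> R) (y v x : nat -> 'rV[R]_d) (eps : nat -> R) :
  maximal_monotone A ->
  (exists zs, A zs 0) ->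
  (1 <= p)%N ->
  0 < sigma -> sigma < 1 -> 0 < theta ->
  x 0%N = x0 ->
  (forall k, 0 < lam k) ->
  (forall k, 0 <= eps k) ->
  (forall k : nat,
     enlargement A (eps k.+1) (y k.+1) (v k.+1) /\
     sqnorm (lam k.+1 *: v k.+1 + y k.+1 - x k) + 2 * lam k.+1 * eps k.+1
       <= sigma ^+ 2 * sqnorm (y k.+1 - x k) /\
     lam k.+1 * normv (y k.+1 - x k) ^+ (p - 1) >= theta /\
     x k.+1 = x k - lam k.+1 *: v k.+1) ->
  forall k : nat, (1 <= k)%N ->
    (forall (z w : 'rV[R]_d), A z w ->
       \sum_(1 <= i < k.+1) lam i * dotv w (y i - z)
       + (1 - sigma ^+ 2) / 2 * \sum_(1 <= i < k.+1) sqnorm (x i.-1 - y i)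
       <= sqnorm (x 0%N - z) / 2 - sqnorm (x k - z) / 2) /\
    (forall (z w : 'rV[R]_d), A z w ->
       dotv w ((\sum_(1 <= i < k.+1) lam i)^-1 *: \sum_(1 <= i < k.+1) lam i *: y i - z)
       <= (sqnorm (x 0%N - z) / 2) / \sum_(1 <= i < k.+1) lam i) /\
    (forall zs : 'rV[R]_d, A zs 0 ->
       \sum_(1 <= i < k.+1) sqnorm (x i.-1 - y i)
       <= sqnorm (x 0%N - zs) / (1 - sigma ^+ 2)).
Proof.
move=> _ _ _ sigma_gt0 sigma_lt1 _ _ lam_gt0 _ hpe k k_ge1.
have gap_gt0 : 0 < 1 - sigma ^+ 2 by rewrite subr_gt0 expr2; nra.
set c := (1 - sigma ^+ 2) / 2.
have c_gt0 : 0 < c by rewrite divr_gt0.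
set Q := \sum_(1 <= i < k.+1) sqnorm (x i.-1 - y i).
have Q_ge0 : 0 <= Q by apply: sumr_ge0 => i _; apply: sqnorm_ge0.
have descent z w : A z w ->
    \sum_(1 <= i < k.+1) lam i * dotv w (y i - z) + c * Q
    <= sqnorm (x 0%N - z) / 2 - sqnorm (x k - z) / 2.
  move=> Azw; rewrite /Q mulr_sumr -big_split /=.
  apply: (telescoping_le (e := fun n => sqnorm (x n - z) / 2)) => n.
  have [Ayv [err [_ ->]]] := hpe n.
  exact: (proximal_step_descent (lam_gt0 _) Ayv Azw err).
have S_gt0 : 0 < \sum_(1 <= i < k.+1) lam i.
  rewrite big_nat_recr //= ltr_wpDl //.
  by apply: sumr_ge0 => i _; apply: ltW.
split; [exact: descent | split].
- move=> z w Azw; rewrite dotv_weighted_mean ?gt_eqF // mulrC ler_pM2r ?invr_gt0 //.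
  have := descent z w Azw; have := sqnorm_ge0 (x k - z); nra.
- move=> zs Azs; rewrite ler_pdivlMr //.
  have := descent zs 0 Azs; have := sqnorm_ge0 (x k - zs).
  under eq_bigr => i _ do rewrite dotv0l mulr0.
  rewrite big1_eq /c expr2; lra.
Qed.
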